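(* Let $k$ be a field of characteristic $0$, $R=k[x_1,\dots,x_n]$ acting on $S=k[X_1,\dots,X_n]$ by differentiation ($x_i\circ F=\partial F/\partial X_i$), and let $\ell=x_1+\dots+x_n$. For any monomial $M\in S$ and any integer $d\ge 0$, the Artinian Gorenstein algebra $R/\operatorname{Ann}(\ell^d\circ M)$ has the strong Lefschetz property. In particular, for every elementary symmetric polynomial $e_d(X_1,\dots,X_n)$, $0\le d\le n$, the algebra $R/\operatorname{Ann}(e_d(X_1,\dots,X_n))$ has the strong Lefschetz property.
   Context: For $B\subseteq S$, $\operatorname{Ann}(B)=\{f\in R\mid f\circ b=0\ \forall b\in B\}$. For a homogeneous $F\in S$, $R/\operatorname{Ann}(F)$ is the Artinian Gorenstein algebra with dual generator $F$. A graded Artinian $k$-algebra $A$ has the strong Lefschetz property if there exists $\ell\in A_1$ such that for all $i$ and $j\ge0$ the multiplication map $\cdot\ell^j\colon A_i\to A_{i+j}$ is injective or surjective. *)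

From HB Require Import structures.
From mathcomp Require Import all_boot all_order all_algebra.
From mathcomp Require Import mpoly.
Set Implicit Arguments. Unset Strict Implicit. Unset Printing Implicit Defensive.
Import Order.TTheory GRing.Theory.
Local Open Scope ring_scope.

(* Apolarity (contraction) action of R = k[x_1..x_n] on S = k[X_1..X_n]:
   x^m o F = d^m F / dX^m, extended linearly. Both rings are {mpoly k[n]}. *)
Definition contract {n : nat} {k : fieldType} (f F : {mpoly k[n]}) : {mpoly k[n]} :=
  \sum_(m <- msupp f) f@_m *: mderivm m F.

Definition inAnn {n : nat} {k : fieldType} (F f : {mpoly k[n]}) : Prop :=
  contract f F = 0.

(* A = R/Ann(F), graded by degree: A_i = R_i / Ann(F)_i.
   Multiplication by L^j : A_i -> A_{i+j}. *)
Definition mult_injective {n : nat} {k : fieldType} (F L : {mpoly k[n]}) (i j : nat) : Prop :=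
  forall f : {mpoly k[n]}, f \is i.-homog -> inAnn F (L ^+ j * f) -> inAnn F f.

Definition mult_surjective {n : nat} {k : fieldType} (F L : {mpoly k[n]}) (i j : nat) : Prop :=
  forall g : {mpoly k[n]}, g \is (i + j)%N.-homog ->
    exists2 f : {mpoly k[n]}, f \is i.-homog & inAnn F (g - L ^+ j * f).

Definition SLP_Ann {n : nat} {k : fieldType} (F : {mpoly k[n]}) : Prop :=
  exists2 L : {mpoly k[n]}, L \is 1.-homog &
    forall i j : nat, mult_injective F L i j \/ mult_surjective F L i j.

Definition ell_sum (n : nat) (k : fieldType) : {mpoly k[n]} := \sum_(i < n) 'X_i.

From HB Require Import structures.
From mathcomp Require Import all_boot all_order all_algebra.
From mathcomp Require Import ssrcomplements mpoly bigenough zify ring.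
Set Implicit Arguments. Unset Strict Implicit. Unset Printing Implicit Defensive.
Import Order.TTheory GRing.Theory BigEnough.
Local Open Scope ring_scope.

(* On the span of the divisors of X^M, graded by degree s <= N := deg M, contraction
   by l = x_1 + ... + x_n is the lowering operator E of an sl2-triple whose raising
   operator F satisfies [E, F] = N - 2s in degree s; reversing the grading exchanges
   E and F.  The usual sl2 computations give hard Lefschetz for E: E^t is injective
   in degree s when N + t <= 2s and maps degree s onto degree s - t when 2s <= N + t.
   Contraction with X^M identifies the degree-i part of R/Ann(X^M) with that span in
   degree N - i, and R/Ann(l^d o X^M) is its quotient by the kernel of E^d, so
   multiplication by l^j is injective or surjective in every degree.  Finally e_d is
   a nonzero multiple of l^(n-d) o e_n, and e_n = X_1 ... X_n. *)

Section IterLinear.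
Variables (R : pzRingType) (V : lmodType R) (f : {linear V -> V}).

Lemma iter_is_linear t : linear (iter t f).
Proof. by elim: t => [|t IH] a u v //=; rewrite IH linearP. Qed.

HB.instance Definition _ t :=
  GRing.isLinear.Build R V V _ (iter t f) (iter_is_linear t).

End IterLinear.

Lemma char0_natf_neq0 (k : fieldType) m :
  [pchar k] =i pred0 -> (0 < m)%N -> m%:R != 0 :> k.
Proof. by move/pcharf0P=> ->; rewrite -lt0n. Qed.

Record graded_sl2 (k : fieldType) (V : lmodType k) (N : nat)
    (W : nat -> V -> Prop) (E F : V -> V) : Prop := GradedSl2 {
  sl2_0 : forall s, W s 0;
  sl2_D : forall s u v, W s u -> W s v -> W s (u + v);
  sl2_Z : forall s (a : k) v, W s v -> W s (a *: v);
  sl2_gt : forall s v, (N < s)%N -> W s v -> v = 0;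
  sl2_E : forall s v, W s v -> W s.-1 (E v);
  sl2_E0 : forall v, W 0 v -> E v = 0;
  sl2_F : forall s v, W s v -> W s.+1 (F v);
  sl2_comm : forall s v, W s v -> E (F v) - F (E v) = (N%:R - (s.*2)%:R) *: v
}.

Section GradedSl2.
Variables (k : fieldType) (V : lmodType k) (N : nat) (W : nat -> V -> Prop).
Variables (E F : {linear V -> V}).
Hypothesis sl2 : graded_sl2 N W E F.

Lemma sl2_B s u v : W s u -> W s v -> W s (u - v).
Proof.
by move=> Wu Wv; rewrite -scaleN1r; apply: (sl2_D sl2) => //; apply: (sl2_Z sl2).
Qed.

Lemma sl2_iterF s t v : W s v -> W (s + t) (iter t F v).
Proof.
by move=> Wv; elim: t => [|t IH]; rewrite ?addn0 // addnS; apply: (sl2_F sl2).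
Qed.

Lemma sl2_iterE s t v : W s v -> W (s - t) (iter t E v).
Proof.
by move=> Wv; elim: t => [|t IH]; rewrite ?subn0 // subnS; apply: (sl2_E sl2).
Qed.

Lemma sl2_FE s v : W s v -> W s (F (E v)).
Proof.
case: s => [|s] Wv; first by rewrite (sl2_E0 sl2 Wv) linear0; apply: (sl2_0 sl2).
exact: (sl2_F sl2) (sl2_E sl2 Wv).
Qed.

Lemma iterE_gt s t v : (s < t)%N -> W s v -> iter t E v = 0.
Proof.
move=> lt_st Wv; rewrite -(subnK lt_st) iterD /= (sl2_E0 sl2 (_ : W 0 _)).
  exact: linear0.
by rewrite -(subnn s); apply: sl2_iterE.
Qed.

Definition sl2_coef s t : k := t.+1%:R * (N%:R - (s.*2 + t)%:R).

Lemma E_iterF s t v : W s v ->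
  E (iter t.+1 F v) = iter t.+1 F (E v) + sl2_coef s t *: iter t F v.
Proof.
move=> Wv; elim: t => [|t IH].
  by apply/eqP; rewrite addrC -subr_eq (sl2_comm sl2 Wv) /sl2_coef mul1r addn0.
have Wt := sl2_iterF t.+1 Wv.
move: (sl2_comm sl2 Wt) => /eqP; rewrite subr_eq => /eqP ->.
rewrite IH linearD linearZ /= -/(iter t.+2 F (E v)) addrCA -scalerDl.
congr (_ + _ *: _); rewrite /sl2_coef -!mul2n !natrD ?natrM.
rewrite -[(t.+2)%N]addn1 -[(t.+1)%N]addn1 !natrD; ring.
Qed.

Lemma iterE_iterF_primitive s t w : W s w -> E w = 0 ->
  iter t E (iter t F w) = (\prod_(j < t) sl2_coef s j) *: w.
Proof.
move=> Ww Ew; elim: t => [|t IH]; first by rewrite big_ord0 scale1r.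
rewrite iterSr (E_iterF _ Ww) Ew linear0 add0r linearZ /= IH scalerA big_ord_recr.
by rewrite mulrC.
Qed.

Hypothesis char0 : [pchar k] =i pred0.

Lemma sl2_coef_neq0 s t : (s.*2 + t < N)%N -> sl2_coef s t != 0.
Proof.
move=> lt_N; rewrite mulf_neq0 ?(char0_natf_neq0 char0) // -natrB; last exact: ltnW.
by rewrite (char0_natf_neq0 char0) ?subn_gt0.
Qed.

(* Applying E to F^(t+1) v = 0 gives F^t (F (E v) + c v) = 0: induct on t to get
   F (E v) = - c v, then on s to get E v = 0. *)
Lemma iterF_inj s t v : (s.*2 + t <= N)%N -> W s v -> iter t F v = 0 -> v = 0.
Proof.
elim/ltn_ind: s t v => s IHs t; elim: t => [//|t IHt] v le_N Wv Fv0.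
have c0 : sl2_coef s t != 0 by apply: sl2_coef_neq0; lia.
have FEv : F (E v) = - sl2_coef s t *: v.
  apply/eqP; rewrite scaleNr -subr_eq0 opprK; apply/eqP/IHt; first lia.
    exact: (sl2_D sl2) (sl2_FE Wv) (sl2_Z sl2 _ Wv).
  by rewrite linearD linearZ /= -iterSr -(E_iterF _ Wv) Fv0 linear0.
have Ev0 : E v = 0.
  move: IHs le_N Wv FEv; case: s {c0 IHt} => [|s] IHs le_N Wv FEv.
    exact: (sl2_E0 sl2) Wv.
  apply: (IHs s (ltnSn s) t.+2); [lia | exact: (sl2_E sl2) Wv |].
  by rewrite iterSr FEv linearZ /= -iterS Fv0 scaler0.
move: FEv; rewrite Ev0 linear0 => /esym/eqP.
by rewrite scaleNr oppr_eq0 scaler_eq0 (negbTE c0) => /eqP.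
Qed.

(* Correct w by some E^t u so that it becomes primitive, where E^t F^t is invertible. *)
Lemma iterE_surj q t w : (q.*2 + t <= N)%N -> W q w ->
  exists2 v, W (q + t) v & iter t E v = w.
Proof.
elim/ltn_ind: q t w => q IHq t w le_N Wq.
have [u Wu Ew'] : exists2 u, W (q + t) u & E (w - iter t E u) = 0.
  case: q IHq le_N Wq => [|q] IHq le_N Wq.
    by exists 0; [exact: (sl2_0 sl2) | rewrite linear0 subr0; exact: (sl2_E0 sl2) Wq].
  have [|u Wu Eu] := IHq q (ltnSn q) t.+1 (E w) _ (sl2_E sl2 Wq); first lia.
  by exists u; rewrite ?addSnnS // linearB /= -iterS Eu subrr.
set w' := w - iter t E u.
have Ww' : W q w' by apply: sl2_B Wq _; rewrite -[q](addnK t); apply: sl2_iterE.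
set p := \prod_(j < t) sl2_coef q j.
have p0 : p != 0.
  rewrite prodf_seq_neq0; apply/allP => j _.
  by apply: sl2_coef_neq0; have := ltn_ord j; lia.
exists (u + p^-1 *: iter t F w').
  exact: (sl2_D sl2) Wu (sl2_Z sl2 _ (sl2_iterF _ Ww')).
rewrite linearD linearZ /= (iterE_iterF_primitive _ Ww' Ew') scalerA mulVf // scale1r.
by rewrite addrC subrK.
Qed.

Lemma iterE_surj_mod_ker s j d w :
  (s.*2 <= N + (d + j))%N -> (j <= s)%N -> W (s - j) w ->
  exists2 v, W s v & iter d E (iter j E v) = iter d E w.
Proof.
move=> le_N le_js Ww.
suff [v Wv Ev] : exists2 v, W s v & iter (d + j) E v = iter d E w.
  by exists v; rewrite // -iterD.
have [lt_s|le_s] := ltnP s (d + j).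
  exists 0; first exact: (sl2_0 sl2).
  by rewrite (iterE_gt _ Ww) ?linear0 //; lia.
have [|v Wv <-] := iterE_surj (t := d + j) _ (sl2_iterE d Ww); first lia.
by exists v => //; move: Wv; rewrite -subnDA [(j + d)%N]addnC subnK.
Qed.

End GradedSl2.

Section Dual.
Variables (k : fieldType) (V : lmodType k) (N : nat) (W : nat -> V -> Prop).
Variables (E F : {linear V -> V}).
Hypothesis sl2 : graded_sl2 N W E F.

Definition dual_grading s v : Prop := if (s <= N)%N then W (N - s) v else v = 0.

Lemma graded_sl2_dual : graded_sl2 N dual_grading F E.
Proof.
rewrite /dual_grading; split.
- by move=> s; case: ifP => _ //; apply: (sl2_0 sl2).
- by move=> s u v; case: ifP => _; [apply: (sl2_D sl2) | move=> -> ->; rewrite addr0].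
- by move=> s a v; case: ifP => _; [apply: (sl2_Z sl2) | move=> ->; rewrite scaler0].
- by move=> s v lt_Ns; rewrite leqNgt lt_Ns.
- case=> [|s] v /=.
    rewrite !subn0 => Wv; rewrite (sl2_gt sl2 (ltnSn N) (sl2_F sl2 Wv)).
    exact: (sl2_0 sl2).
  case: ifP => lt_sN Wv; last by rewrite Wv linear0; case: ifP => _ //; apply: (sl2_0 sl2).
  by rewrite ltnW // -subnSK //; apply: (sl2_F sl2).
- by move=> v; rewrite subn0 => Wv; apply: (sl2_gt sl2) (sl2_F sl2 Wv).
- move=> s v; case: ifP => le_sN Wv.
    case: ifP => [lt_sN | /negbT]; first by rewrite subnS; apply: (sl2_E sl2).
    rewrite -ltnNge ltnS => le_Ns; have eN : s = N by apply/eqP; rewrite eqn_leq le_sN.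
    by move: Wv; rewrite eN subnn => /(sl2_E0 sl2).
  by rewrite Wv linear0; case: ifP => _ //; apply: (sl2_0 sl2).
- move=> s v; case: ifP => le_sN Wv; last by rewrite Wv !linear0 addr0.
  rewrite -opprB (sl2_comm sl2 Wv) -scaleNr; congr (_ *: _).
  by rewrite -!mul2n !natrM natrB //; ring.
Qed.

Hypothesis char0 : [pchar k] =i pred0.

Lemma iterE_inj s t v : (N + t <= s.*2)%N -> W s v -> iter t E v = 0 -> v = 0.
Proof.
move=> le_s Wv; have [le_sN|lt_Ns] := leqP s N; last by move=> _; apply: (sl2_gt sl2) Wv.
apply: (iterF_inj graded_sl2_dual char0 (s := N - s)); first lia.
by rewrite /dual_grading leq_subr subKn.
Qed.

End Dual.

Section Contraction.
Variables (n : nat) (k : fieldType).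
Implicit Types (f g P : {mpoly k[n]}).

Lemma contract_is_linear f : linear (@contract n k f).
Proof.
move=> a P Q; rewrite /contract scaler_sumr -big_split /=; apply: eq_bigr => m _.
by rewrite mderivmD mderivmZ scalerDr !scalerA mulrC.
Qed.

HB.instance Definition _ f := GRing.isLinear.Build k {mpoly k[n]} {mpoly k[n]} _
  (@contract n k f) (contract_is_linear f).

Lemma contractwE K f P : (msize f <= K)%N ->
  contract f P = \sum_(m : 'X_{1..n < K}) f@_m *: P^`M[m].
Proof.
move=> le_fK; pose I : subFinType _ := 'X_{1..n < K}.
rewrite /contract (big_mksub I) ?msupp_uniq //=; last first.
  by move=> m /msize_mdeg_lt /leq_trans; apply.
by rewrite big_rmcond //= => m /memN_msupp_eq0 ->; rewrite scale0r.
Qed.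

Lemma contract_linearl P a f g :
  contract (a *: f + g) P = a *: contract f P + contract g P.
Proof.
pose_big_enough K; first rewrite !(contractwE (K := K)) //.
  rewrite scaler_sumr -big_split; apply: eq_bigr => m _.
  by rewrite mcoeffD mcoeffZ scalerDl scalerA.
by close.
Qed.

Lemma contract0l P : contract 0 P = 0.
Proof. by rewrite /contract msupp0 big_nil. Qed.

Lemma contractDl P f g : contract (f + g) P = contract f P + contract g P.
Proof. by have := contract_linearl P 1 f g; rewrite !scale1r. Qed.

Lemma contractZl P a f : contract (a *: f) P = a *: contract f P.
Proof. by rewrite -[a *: f]addr0 contract_linearl contract0l addr0. Qed.

Lemma contractBl P f g : contract (f - g) P = contract f P - contract g P.
Proof. by rewrite -scaleN1r contractDl contractZl scaleN1r. Qed.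

Lemma contract_suml P (I : Type) (r : seq I) (Q : pred I) (F : I -> {mpoly k[n]}) :
  contract (\sum_(i <- r | Q i) F i) P = \sum_(i <- r | Q i) contract (F i) P.
Proof. exact: (big_morph _ (contractDl P) (contract0l P)). Qed.

Lemma contractX m P : contract 'X_[m] P = P^`M[m].
Proof. by rewrite /contract msuppX big_seq1 mcoeffX eqxx scale1r. Qed.

Lemma contract1 P : contract 1 P = P.
Proof. by rewrite -mpolyX0 contractX mderivm0m. Qed.

Lemma contractM f g P : contract (f * g) P = contract f (contract g P).
Proof.
rewrite {1}[f]mpolyE big_distrl /= contract_suml [RHS]/contract.
apply: eq_bigr => a _; rewrite -scalerAl contractZl; congr (_ *: _).
rewrite {1}[g]mpolyE big_distrr /= contract_suml [in RHS]/contract linear_sum.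
apply: eq_bigr => b _; rewrite -scalerAr contractZl -mpolyXD contractX linearZ.
by rewrite addmC mderivmDm.
Qed.

Lemma contract_ell P : contract (ell_sum n k) P = \sum_(i < n) P^`M(i).
Proof.
by rewrite contract_suml; apply: eq_bigr => i _; rewrite contractX mderivmU1m.
Qed.

Lemma contract_ell_exp t P :
  contract (ell_sum n k ^+ t) P = iter t (contract (ell_sum n k)) P.
Proof.
by elim: t => [|t IH]; rewrite ?expr0 ?contract1 // exprS contractM IH.
Qed.

Lemma ell_sum_homog : ell_sum n k \is 1.-homog.
Proof. by apply: rpred_sum => i _; rewrite dhomogX /= mdeg1. Qed.

End Contraction.

Section Euler.
Variables (n : nat) (R : comNzRingType).
Implicit Types (P : {mpoly R[n]}).

Lemma mulX_mderivX i m : 'X_i * ('X_[m] : {mpoly R[n]})^`M(i) = (m i)%:R *: 'X_[m].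
Proof.
rewrite mderivX -scalerAr; have [->|mi0] := eqVneq (m i) 0%N; first by rewrite !scale0r.
by rewrite -mpolyXD addmC submK // lep1mP.
Qed.

Lemma mpoly_euler s P : P \is s.-homog -> \sum_(i < n) 'X_i * P^`M(i) = s%:R *: P.
Proof.
move=> hP; rewrite {1}[P]mpolyE.
under eq_bigr do rewrite linear_sum mulr_sumr.
rewrite exchange_big {3}[P]mpolyE scaler_sumr; apply: eq_big_seq => m mP /=.
under eq_bigr do rewrite linearZ -scalerAr mulX_mderivX scalerA mulrC -scalerA.
by rewrite -scaler_suml -natr_sum -mdegE (dhomog_mf hP mP) scalerA mulrC.
Qed.

Lemma mderivXU i j : ('X_i : {mpoly R[n]})^`M(j) = (i == j)%:R.
Proof.
rewrite mderivX mnm1E; have [<-|] := eqVneq i j; last by rewrite scale0r.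
by rewrite /= -{1}[U_(i)%MM]add0m addmK mpolyX0 scale1r.
Qed.

End Euler.

Section DivisorSpan.
Variables (n : nat) (k : fieldType) (M : 'X_{1..n}).
Implicit Types (P Q : {mpoly k[n]}).

Definition divisor_span s P : Prop :=
  P \is s.-homog /\ forall m, m \in msupp P -> (m <= M)%MM.

Definition raise P : {mpoly k[n]} :=
  \sum_(i < n) 'X_i * ((M i)%:R *: P - 'X_i * P^`M(i)).

Lemma raise_is_linear : linear raise.
Proof.
move=> a P Q; rewrite /raise scaler_sumr -big_split /=; apply: eq_bigr => i _.
by rewrite mderivD mderivZ -!mul_mpolyC; ring.
Qed.

HB.instance Definition _ := GRing.isLinear.Build k {mpoly k[n]} {mpoly k[n]} _
  raise raise_is_linear.

Lemma raiseX b : raise 'X_[b] = \sum_(i < n) ((M i)%:R - (b i)%:R) *: 'X_[b + U_(i)].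
Proof.
apply: eq_bigr => i _; rewrite mulX_mderivX -scalerBl -scalerAr.
by rewrite addmC mpolyXD.
Qed.

Lemma mderiv_raise j P :
  (raise P)^`M(j) = raise P^`M(j) + ((M j)%:R *: P - 'X_j * P^`M(j) *+ 2).
Proof.
rewrite linear_sum /=.
under eq_bigr => i _ do rewrite mderivM linearB linearZ /= mderivM !mderivXU mderiv_comm.
transitivity (\sum_(i < n) ('X_i * ((M i)%:R *: P^`M(j) - 'X_i * P^`M(j)^`M(i))
    + (i == j)%:R * ((M i)%:R *: P - 'X_i * P^`M(i) *+ 2))).
  by apply: eq_bigr => i _; rewrite -!mul_mpolyC; ring.
rewrite big_split /=; congr (_ + _).
rewrite (bigD1 j) //= eqxx mul1r big1 ?addr0 // => i /negbTE ->.
exact: mul0r.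
Qed.

Lemma contract_ell_raise s P : P \is s.-homog ->
  contract (ell_sum n k) (raise P) - raise (contract (ell_sum n k) P)
    = ((mdeg M)%:R - (s.*2)%:R) *: P.
Proof.
move=> hP; rewrite !contract_ell; under eq_bigr do rewrite mderiv_raise.
rewrite big_split /= -linear_sum addrAC subrr add0r sumrB sumrMnl (mpoly_euler hP).
by rewrite -scaler_suml -natr_sum -mdegE scalerMnl -scalerBl -mul2n natrM mulr_natl.
Qed.

Lemma divisor_span0 s : divisor_span s 0.
Proof. by split=> [|m]; rewrite ?rpred0 // msupp0. Qed.

Lemma divisor_spanD s P Q :
  divisor_span s P -> divisor_span s Q -> divisor_span s (P + Q).
Proof.
move=> [hP sP] [hQ sQ]; split=> [|m /msuppD_le]; first exact: rpredD.
by rewrite mem_cat => /orP [/sP | /sQ].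
Qed.

Lemma divisor_spanZ s a P : divisor_span s P -> divisor_span s (a *: P).
Proof. by move=> [hP sP]; split=> [|m /msuppZ_le /sP //]; exact: rpredZ. Qed.

Lemma divisor_span_sum s (I : Type) (r : seq I) (B : pred I) (F : I -> {mpoly k[n]}) :
  (forall i, B i -> divisor_span s (F i)) -> divisor_span s (\sum_(i <- r | B i) F i).
Proof. by apply: big_ind => //; [exact: divisor_span0 | exact: divisor_spanD]. Qed.

Lemma divisor_spanX s b : (b <= M)%MM -> mdeg b = s -> divisor_span s 'X_[b].
Proof.
by move=> le_bM <-; split=> [|m]; rewrite ?dhomogX // msuppX mem_seq1 => /eqP ->.
Qed.

Lemma lem_mdeg (m m' : 'X_{1..n}) : (m <= m')%MM -> (mdeg m <= mdeg m')%N.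
Proof. by move=> le_mm'; rewrite -(submK le_mm') mdegD leq_addl. Qed.

Lemma divisor_span_gt s P : (mdeg M < s)%N -> divisor_span s P -> P = 0.
Proof.
move=> lt_Ms [hP sP]; apply/eqP; apply: contraTT lt_Ms => /mlead_supp mP.
by rewrite -leqNgt -(dhomog_mf hP mP) lem_mdeg ?sP.
Qed.

Lemma divisor_span_linear (G : {linear {mpoly k[n]} -> {mpoly k[n]}}) s s' P :
  (forall b, (b <= M)%MM -> mdeg b = s -> divisor_span s' (G 'X_[b])) ->
  divisor_span s P -> divisor_span s' (G P).
Proof.
move=> GX [hP sP]; rewrite [P]mpolyE linear_sum big_seq.
apply: divisor_span_sum => m mP; rewrite linearZ.
by apply/divisor_spanZ/GX; [exact: sP | exact: (dhomog_mf hP)].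
Qed.

Lemma divisor_span_lower s P :
  divisor_span s P -> divisor_span s.-1 (contract (ell_sum n k) P).
Proof.
apply: divisor_span_linear => b le_bM <- /=; rewrite contract_ell.
apply: divisor_span_sum => i _; rewrite mderivX.
have [->|bi0] := eqVneq (b i) 0%N; first by rewrite scale0r; exact: divisor_span0.
apply/divisor_spanZ/divisor_spanX; first exact: lepm_trans (lem_subr _ _) le_bM.
by rewrite -[in RHS](submK (_ : U_(i) <= b)%MM) ?lep1mP // mdegD mdeg1 addn1.
Qed.

Lemma contract_ell_divisor_span0 P : divisor_span 0 P -> contract (ell_sum n k) P = 0.
Proof.
move=> [hP _]; rewrite [P]mpolyE linear_sum big1_seq // => m /andP [_ mP].
have : mdeg m == 0%N by rewrite (dhomog_mf hP mP).
rewrite mdeg_eq0 => /eqP ->; rewrite linearZ /= contract_ell big1 ?scaler0 // => i _.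
by rewrite mderivX mnm0E scale0r.
Qed.

Lemma divisor_span_raise s P : divisor_span s P -> divisor_span s.+1 (raise P).
Proof.
apply: divisor_span_linear => b le_bM <- /=; rewrite raiseX.
apply: divisor_span_sum => i _.
have [->|bi] := eqVneq (b i) (M i); first by rewrite subrr scale0r; exact: divisor_span0.
apply/divisor_spanZ/divisor_spanX; last by rewrite mdegD mdeg1 addn1.
apply/mnm_lepP => j; rewrite mnmDE mnm1E; have /mnm_lepP/(_ j) := le_bM.
by case: eqVneq => [<-|_]; rewrite ?addn0 ?addn1 // ltn_neqAle bi.
Qed.

Lemma graded_sl2_divisor_span :
  graded_sl2 (mdeg M) divisor_span (contract (ell_sum n k)) raise.
Proof.
split.
- exact: divisor_span0.
- exact: divisor_spanD.
- exact: divisor_spanZ.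
- exact: divisor_span_gt.
- exact: divisor_span_lower.
- exact: contract_ell_divisor_span0.
- exact: divisor_span_raise.
- by move=> s P [hP _]; exact: contract_ell_raise.
Qed.

End DivisorSpan.

Section MonomialLefschetz.
Variables (n : nat) (k : fieldType) (M : 'X_{1..n}).
Hypothesis char0 : [pchar k] =i pred0.
Implicit Types (f g P : {mpoly k[n]}).

Lemma contractX_XM_eq0 a : ~~ (a <= M)%MM -> contract 'X_[a] ('X_[M] : {mpoly k[n]}) = 0.
Proof.
move=> not_le; have /existsP [l lt_Ma] : [exists l, M l < a l]%N.
  by apply: contraR not_le => /existsPn le_aM; apply/mnm_lepP => l; rewrite leqNgt le_aM.
by rewrite contractX mderivmX (bigD1 l) //= ffact_small // mul0n scale0r.
Qed.

Lemma contract_XM_divisor_span f i : f \is i.-homog ->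
  divisor_span M (mdeg M - i) (contract f 'X_[M]).
Proof.
move=> hf; rewrite /contract big_seq; apply: divisor_span_sum => a af.
apply: divisor_spanZ; have [le_aM|/contractX_XM_eq0] := boolP (a <= M)%MM.
  rewrite mderivmX; apply/divisor_spanZ/divisor_spanX; first exact: lem_subr.
  by rewrite -(dhomog_mf hf af) -{2}(submK le_aM) mdegD addnK.
by rewrite contractX => ->; exact: divisor_span0.
Qed.

Lemma contract_XM_gt f i : f \is i.-homog -> (mdeg M < i)%N ->
  contract f 'X_[M] = 0.
Proof.
move=> hf lt_Mi; rewrite /contract big1_seq // => a /andP [_ af].
rewrite -contractX contractX_XM_eq0 ?scaler0 //.
by apply: contraTN lt_Mi => /lem_mdeg; rewrite -leqNgt (dhomog_mf hf af).
Qed.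

Lemma contract_XM_onto s P : (s <= mdeg M)%N -> divisor_span M s P ->
  exists2 f, f \is (mdeg M - s).-homog & contract f 'X_[M] = P.
Proof.
move=> le_sM [hP sP].
pose c b : k := (\prod_(l < n) (M l)^_((M - b)%MM l))%:R.
have c_neq0 b : c b != 0.
  apply: char0_natf_neq0 char0 _; rewrite prodn_gt0 // => l.
  by rewrite ffact_gt0 mnmBE leq_subr.
exists (\sum_(b <- msupp P) (P@_b / c b) *: 'X_[M - b]).
  rewrite big_seq; apply: rpred_sum => b bP; apply/rpredZ; rewrite dhomogX /=.
  by rewrite -(dhomog_mf hP bP) -{2}(submK (sP _ bP)) mdegD addnK.
rewrite contract_suml [RHS]mpolyE; apply: eq_big_seq => b bP.
rewrite contractZl contractX mderivmX submBA ?sP // addmC addmK scalerA divfK //.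
Qed.

Lemma SLP_contract_ell_monomial d : SLP_Ann (contract (ell_sum n k ^+ d) 'X_[M]).
Proof.
set N := mdeg M; set E := contract (ell_sum n k).
have sl2 := graded_sl2_divisor_span k M.
have ann_iterE f :
    contract f (contract (ell_sum n k ^+ d) 'X_[M]) = iter d E (contract f 'X_[M]).
  by rewrite -contractM mulrC contractM contract_ell_exp.
have ellM_iterE j f : contract (ell_sum n k ^+ j * f) 'X_[M] = iter j E (contract f 'X_[M]).
  by rewrite contractM contract_ell_exp.
exists (ell_sum n k) => [|i j]; first exact: ell_sum_homog.
have [le_N|lt_N] := leqP (N + (d + j)) (N - i).*2.
  left=> f hf; rewrite /inAnn !ann_iterE ellM_iterE -iterD.
  by move=> /(iterE_inj sl2 char0 le_N (contract_XM_divisor_span hf)) ->; exact: linear0.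
right=> g hg; have [lt_Nij|le_ijN] := ltnP N (i + j).
  exists 0; first exact: rpred0.
  by rewrite /inAnn mulr0 subr0 ann_iterE (contract_XM_gt hg lt_Nij) linear0.
have Wg : divisor_span M (N - i - j) (contract g 'X_[M]).
  by rewrite -subnDA; exact: contract_XM_divisor_span hg.
have [|v Wv Ev] := iterE_surj_mod_ker sl2 char0 (ltnW lt_N) _ Wg; first lia.
have [f hf fv] := contract_XM_onto (leq_subr i N) Wv.
have le_iN : (i <= N)%N := leq_trans (leq_addr j i) le_ijN.
exists f; first by rewrite subKn in hf.
by rewrite /inAnn contractBl !ann_iterE ellM_iterE fv Ev subrr.
Qed.

End MonomialLefschetz.

Lemma SLP_AnnZ (n : nat) (k : fieldType) (c : k) (G : {mpoly k[n]}) :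
  c != 0 -> SLP_Ann G -> SLP_Ann (c *: G).
Proof.
move=> c0; have annZ f : inAnn (c *: G) f <-> inAnn G f.
  rewrite /inAnn linearZ /=; split=> [/eqP|->]; last exact: scaler0.
  by rewrite scaler_eq0 (negbTE c0) => /eqP.
move=> [L hL HL]; exists L => // i j; case: (HL i j) => [inj|surj]; [left|right].
  by move=> f hf /annZ /(inj f hf) /annZ.
by move=> g hg; have [f hf /annZ] := surj g hg; exists f.
Qed.

Section ElementarySymmetric.
Variables (n : nat) (k : fieldType).

Lemma mechar_addU d (m : 'X_{1..n}) i :
  mechar d.+1 (m + U_(i)) = mechar d m && (m i == 0%N).
Proof.
rewrite /mechar mdegD mdeg1 addn1 eqSS -andbA; congr (_ && _).
apply/forallP/andP => [le1|[/forallP le1 /eqP mi0] l].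
  split; first by apply/forallP => l; apply: leq_trans (le1 l); rewrite mnmDE leq_addr.
  by have := le1 i; rewrite mnmDE mnm1E eqxx addn1 ltnS leqn0.
by rewrite mnmDE mnm1E; case: eqVneq => [<-|_]; rewrite ?mi0 ?addn0 ?le1.
Qed.

Lemma card_mechar_zeros d (m : 'X_{1..n}) :
  mechar d m -> #|[pred i | m i == 0%N]| = (n - d)%N.
Proof.
move=> /andP [/eqP <- /forallP le1].
have : (\sum_(i < n) ((m i == 0%N) + m i) = n)%N.
  rewrite -[RHS]card_ord -sum1_card; apply: eq_bigr => i _.
  by have := le1 i; case: (m i) => [|[]].
rewrite big_split /= -mdegE -sum1_card => sum_n.
apply/eqP; rewrite -(eqn_add2r (mdeg m)) subnK.
  by rewrite -[X in _ == X]sum_n big_mkcond.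
exact: leq_trans (leq_addl _ _) (eq_leq sum_n).
Qed.

Lemma contract_ell_mesym d :
  contract (ell_sum n k) (mesym n k d.+1) = (n - d)%:R *: mesym n k d.
Proof.
apply/mpolyP => m; rewrite contract_ell raddf_sum mcoeffZ mcoeff_mesym /=.
under eq_bigr do rewrite mcoeff_mderiv mcoeff_mesym mechar_addU.
have [md|_] := boolP (mechar d m); last by rewrite mulr0 big1 // => i _; rewrite mul0rn.
rewrite mulr1 -(card_mechar_zeros md) -sum1_card natr_sum [RHS]big_mkcond /=.
by apply: eq_bigr => i _; rewrite inE; case: eqP => [->|_]; rewrite ?mul0rn.
Qed.

Lemma contract_ell_exp_mesym d r :
  contract (ell_sum n k ^+ r) (mesym n k (d + r)) = ((n - d) ^_ r)%:R *: mesym n k d.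
Proof.
elim: r => [|r IH]; first by rewrite expr0 contract1 addn0 ffactn0 scale1r.
rewrite exprSr contractM addnS contract_ell_mesym linearZ /= IH scalerA -natrM.
by rewrite ffactnSr subnDA mulnC.
Qed.

Hypothesis char0 : [pchar k] =i pred0.

Lemma SLP_mesym d : (d <= n)%N -> SLP_Ann (mesym n k d).
Proof.
move=> le_dn; have := contract_ell_exp_mesym d (n - d); rewrite subnKC // ffactnn.
have fact_neq0 : ((n - d)`!%:R : k) != 0 := char0_natf_neq0 char0 (fact_gt0 _).
rewrite mesymnnE mprodXE => /(congr1 (fun P => ((n - d)`!%:R)^-1 *: P)).
rewrite scalerA mulVf // scale1r => <-.
by apply: SLP_AnnZ; [rewrite invr_eq0 | exact: SLP_contract_ell_monomial].
Qed.

End ElementarySymmetric.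

Theorem mainTheorem5 (k : fieldType) (n : nat) (char0 : [pchar k] =i pred0) :
  (forall (M : 'X_{1..n}) (d : nat),
      SLP_Ann (contract (ell_sum n k ^+ d) 'X_[M])) /\
  (forall d : nat, (d <= n)%N -> SLP_Ann (mesym n k d)).
Proof.
by split=> [M d | d]; [exact: SLP_contract_ell_monomial | exact: SLP_mesym].
Qed.
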